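(* In $\mathcal{A}_q(1,4)$ we have $X_\delta=q^{-1}X_4^2X_1-q^{-2}\big(q^{-1}X_3+q^{-\frac12}+q^{\frac12}\big)X_2^2$.
   Context: Let $\mathcal{T}$ be the quantum torus over $\mathbb{Z}[q^{\pm\frac12}]$ generated by $X_1^{\pm1},X_2^{\pm1}$ with $X_1X_2=qX_2X_1$, with skew field of fractions $\mathcal{F}$. Define $X_k\in\mathcal{F}$ ($k\in\mathbb{Z}$) by $X_{k-1}X_{k+1}=q^{\frac12}X_k+1$ for $k$ odd and $X_{k-1}X_{k+1}=q^2X_k^4+1$ for $k$ even; $\mathcal{A}_q(1,4)$ is the $\mathbb{Z}[q^{\pm\frac12}]$-subalgebra of $\mathcal{F}$ generated by all $X_k$. Put $X^{(a,b)}=q^{-\frac12ab}X_1^aX_2^b$ and $X_\delta=X^{(-1,-2)}+X^{(-1,2)}+X^{(1,-2)}+(q^{-\frac12}+q^{\frac12})X^{(0,-2)}$. *)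

(* The quantum torus T over Z[v^{+-1}], v = q^{1/2}.
   T is the free Z-module with basis v^n X^(a,b)  (n,a,b : int), with product
     (v^n X^(a,b)) (v^m X^(c,d)) = v^(n+m+ad-bc) X^(a+c,b+d),
   where X^(a,b) = q^{-ab/2} X_1^a X_2^b  (so X_1 X_2 = q X_2 X_1).
   An element is represented by a finite list of (integer coefficient, basis
   monomial) pairs; two lists denote the same element of T iff all their
   coefficients agree ([qeq]). *)
From mathcomp Require Import all_boot all_order all_algebra.
Set Implicit Arguments. Unset Strict Implicit. Unset Printing Implicit Defensive.
Import GRing.Theory Num.Theory.
Local Open Scope ring_scope.

Definition mon := (int * int * int)%type.
Definition qt := seq (int * mon).

Definition qcoef (p : qt) (e : mon) : int := \sum_(t <- p | t.2 == e) t.1.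
Definition qeq (p r : qt) : Prop := forall e, qcoef p e = qcoef r e.

Definition mmul (m1 m2 : mon) : mon :=
  let: (n, a, b) := m1 in let: (n', c, d) := m2 in
  (n + n' + (a * d - b * c), a + c, b + d).

Definition qadd (p r : qt) : qt := p ++ r.
Definition qopp (p : qt) : qt := [seq (- t.1, t.2) | t <- p].
Definition qsub (p r : qt) : qt := qadd p (qopp r).
Definition qmul (p r : qt) : qt := [seq (t.1 * u.1, mmul t.2 u.2) | t <- p, u <- r].

Definition qmon (n a b : int) : qt := [:: (1, (n, a, b))].
Definition qone : qt := qmon 0 0 0.
Definition vpow (n : int) : qt := qmon n 0 0.

Definition X1 : qt := qmon 0 1 0.
Definition X2 : qt := qmon 0 0 1.
Definition X1inv : qt := qmon 0 (-1) 0.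
Definition X2inv : qt := qmon 0 0 (-1).

(* X_3 solves X_1 X_3 = q^2 X_2^4 + 1   (exchange relation, k = 2 even) *)
Definition X3 : qt :=
  qmul X1inv (qadd (qmul (vpow 4) (qmul (qmul X2 X2) (qmul X2 X2))) qone).
(* X_4 solves X_2 X_4 = q^{1/2} X_3 + 1   (exchange relation, k = 3 odd) *)
Definition X4 : qt :=
  qmul X2inv (qadd (qmul (vpow 1) X3) qone).

Definition Xdelta : qt :=
  qadd (qmon 0 (-1) (-2)) (qadd (qmon 0 (-1) 2) (qadd (qmon 0 1 (-2))
    (qadd (qmon (-1) 0 (-2)) (qmon 1 0 (-2))))).

(* Equality in the quantum torus is decidable: the coefficient of [p - r] at a
   monomial outside the support of the list [p - r] is zero, so [p] and [r] agree
   iff the coefficients of [p - r] vanish at the finitely many monomials of that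
   list.  Because [X^(-1,0)] and [X^(0,-1)] are units of the torus, [X_3] and
   [X_4] are given by explicit Laurent polynomials, and all three identities are
   instances of this decision procedure, settled by evaluation. *)
From mathcomp Require Import all_boot all_order all_algebra.
Import GRing.Theory.
Local Open Scope ring_scope.

(* [qcoef] is a big operator, which is locked and does not evaluate. *)
Fixpoint qcoefr (p : qt) (e : mon) : int :=
  if p is t :: p' then (if t.2 == e then t.1 else 0) + qcoefr p' e else 0.

Lemma qcoefrE p e : qcoef p e = qcoefr p e.
Proof.
rewrite /qcoef; elim: p => [|t p IHp] /=; first by rewrite big_nil.
by rewrite big_cons IHp; case: ifP; rewrite ?add0r.
Qed.

Lemma qcoefr_cat p r e : qcoefr (p ++ r) e = qcoefr p e + qcoefr r e.
Proof. by elim: p => [|t p IHp] /=; rewrite ?add0r // IHp addrA. Qed.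

Lemma qcoefr_opp p e : qcoefr (qopp p) e = - qcoefr p e.
Proof.
elim: p => [|t p IHp] /=; first by rewrite oppr0.
by rewrite IHp opprD; case: ifP; rewrite ?oppr0.
Qed.

Lemma qcoefr_sub p r e : qcoefr (qsub p r) e = qcoefr p e - qcoefr r e.
Proof. by rewrite qcoefr_cat qcoefr_opp. Qed.

Lemma qcoefr_notin p e : e \notin [seq t.2 | t <- p] -> qcoefr p e = 0.
Proof.
elim: p => [|t p IHp] //=; rewrite inE negb_or eq_sym => /andP[/negbTE -> ep].
by rewrite add0r IHp.
Qed.

Lemma qcoefr_eq0 p :
  all (fun t => qcoefr p t.2 == 0) p -> forall e, qcoefr p e = 0.
Proof.
move=> /allP p0 e; have [/mapP[t pt ->]|] := boolP (e \in [seq t.2 | t <- p]).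
  exact/eqP/p0.
exact: qcoefr_notin.
Qed.

Definition qeqb (p r : qt) : bool :=
  all (fun t => qcoefr (qsub p r) t.2 == 0) (qsub p r).

Lemma qeqP p r : reflect (qeq p r) (qeqb p r).
Proof.
apply: (iffP idP) => [pr e | pr].
  by apply/eqP; rewrite -subr_eq0 !qcoefrE -qcoefr_sub qcoefr_eq0.
by apply/allP => t _; rewrite qcoefr_sub -!qcoefrE pr subrr.
Qed.

Theorem lemma3p1 :
  qeq (qmul X1 X3) (qadd (qmul (vpow 4) (qmul (qmul X2 X2) (qmul X2 X2))) qone) /\
  qeq (qmul X2 X4) (qadd (qmul (vpow 1) X3) qone) /\
  qeq Xdelta
    (qsub (qmul (vpow (-2)) (qmul (qmul X4 X4) X1))
          (qmul (vpow (-4))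
                (qmul (qadd (qmul (vpow (-2)) X3) (qadd (vpow (-1)) (vpow 1)))
                      (qmul X2 X2)))).
Proof. by split; [|split]; apply/qeqP; vm_compute. Qed.
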